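(* Let $\lambda\in\mathbb C$, $n\in\mathbb N$, $0<\rho\le1$, and let $C_{\rho,\lambda}=\operatorname{conv}\{(\mu,\mu^2,\dots,\mu^n):\mu\in\mathbb C,\ |\mu-\lambda|\le\rho\}\subset\mathbb C^n$. Then $$\operatorname{dist}\{(\lambda,\lambda^2,\dots,\lambda^n),\partial C_{\rho,\lambda}\}\ge\frac{\rho^n}{4^n\max\{1,|\lambda|^n\}},$$ and if $\lambda=0$ then $\operatorname{dist}\{(0,\dots,0),\partial C_{\rho,0}\}\ge\rho^n/2^n$.
   Context: $\operatorname{conv}$ denotes convex hull, $\partial$ topological boundary in $\mathbb C^n$, and distances are taken with respect to the norm $\|z\|=\max_j|z_j|$ on $\mathbb C^n$. *)

(* classical real numbers.  C is modelled as R*R, and a point of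
   C^n as a function nat -> C of which only the coordinates 1..n are used. *)
From Stdlib Require Import Reals Lra.
Open Scope R_scope.

Definition Cx : Type := (R * R)%type.
Definition C0 : Cx := (0, 0).
Definition C1 : Cx := (1, 0).
Definition Cadd (z w : Cx) : Cx := (fst z + fst w, snd z + snd w).
Definition Csub (z w : Cx) : Cx := (fst z - fst w, snd z - snd w).
Definition Cmul (z w : Cx) : Cx :=
  (fst z * fst w - snd z * snd w, fst z * snd w + snd z * fst w).
Definition Cscale (r : R) (z : Cx) : Cx := (r * fst z, r * snd z).
Fixpoint Cpow (z : Cx) (k : nat) : Cx :=
  match k with O => C1 | S j => Cmul z (Cpow z j) end.
Definition Cmod (z : Cx) : R := sqrt (fst z * fst z + snd z * snd z).

Definition vec : Type := nat -> Cx.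

Fixpoint maxupto (n : nat) (f : nat -> R) : R :=
  match n with O => 0 | S m => Rmax (maxupto m f) (f (S m)) end.

Definition vdist (n : nat) (z w : vec) : R :=
  maxupto n (fun k => Cmod (Csub (z k) (w k))).

Definition vec_eq (n : nat) (z w : vec) : Prop :=
  forall k, (1 <= k <= n)%nat -> z k = w k.

Fixpoint rsum (m : nat) (f : nat -> R) : R :=
  match m with O => 0 | S j => rsum j f + f j end.
Fixpoint csum (m : nat) (f : nat -> Cx) : Cx :=
  match m with O => C0 | S j => Cadd (csum j f) (f j) end.

Definition conv (n : nat) (S : vec -> Prop) (z : vec) : Prop :=
  exists (m : nat) (w : nat -> R) (p : nat -> vec),
    (forall i, (i < m)%nat -> 0 <= w i /\ S (p i)) /\
    rsum m w = 1 /\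
    vec_eq n z (fun k => csum m (fun i => Cscale (w i) (p i k))).

Definition interior (n : nat) (S : vec -> Prop) (z : vec) : Prop :=
  exists eps, 0 < eps /\ forall w, vdist n z w < eps -> S w.
Definition closure (n : nat) (S : vec -> Prop) (z : vec) : Prop :=
  forall eps, 0 < eps -> exists w, vdist n z w < eps /\ S w.
Definition boundary (n : nat) (S : vec -> Prop) (z : vec) : Prop :=
  closure n S z /\ ~ interior n S z.

Definition moment (mu : Cx) : vec := fun k => Cpow mu k.

Definition Cset (n : nat) (rho : R) (lam : Cx) : vec -> Prop :=
  conv n (fun v => exists mu, Cmod (Csub mu lam) <= rho /\ vec_eq n v (moment mu)).

(* The ball of radius rho^n / 2^n about the origin lies in C_{rho,0}: with
   omega = exp (2 i pi / (2n+1)), a point u with |u_k| < rho^n / 2^n is the barycentre of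
   the moment vectors of the nodes rho omega^j, j < 2n+1, with weights
   (1 + 2 Re sum_k conj (u_k / rho^k) omega^(j k)) / (2n+1).  The weights are nonnegative
   since 2 sum_k |u_k| / rho^k <= 2n / 2^n <= 1, and the discrete orthogonality of the
   characters j |-> omega^(j k) shows that they reproduce u.
   For general lambda, the binomial change of variables taking the moments of mu to those
   of mu - lambda is linear and expands sup distances by at most
   (1 + |lambda|)^n <= 2^n max (1, |lambda|^n), so the ball of radius
   rho^n / (4^n max (1, |lambda|^n)) about the moment vector of lambda lies in C_{rho,lambda}.
   A boundary point of a set containing an open ball about p is at distance at least the
   radius from p. *)

From Stdlib Require Import Reals Lra Lia.
From Coquelicot Require Import Coquelicot.
From Pilot Require Import Defs.
Open Scope R_scope.

(* [Cx] is Coquelicot's [C], and [Cadd], [Cmul], [Csub], [Cpow] are convertible to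
   Coquelicot's operations (so [change] moves between them); [Cmod] and [Cscale] are not. *)
Lemma Cmod_eq z : Defs.Cmod z = Complex.Cmod z.
Proof. unfold Defs.Cmod, Complex.Cmod. f_equal. simpl. ring. Qed.

Lemma Cscale_eq r z : Cscale r z = (RtoC r * z)%C.
Proof. destruct z as [a b]. unfold Cscale, Cmult, RtoC; simpl. f_equal; ring. Qed.

Lemma csum_components m (f : nat -> Cx) :
  csum m f = (rsum m (fun i => fst (f i)), rsum m (fun i => snd (f i))).
Proof. induction m as [|m IH]; simpl; auto. now rewrite IH. Qed.

Lemma csum_ext m (f g : nat -> Cx) :
  (forall i, (i < m)%nat -> f i = g i) -> csum m f = csum m g.
Proof.
  induction m as [|m IH]; intros H; simpl; auto.
  rewrite IH, H; auto.
Qed.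

Lemma csum_RtoC m a : csum m (fun i => RtoC (a i)) = RtoC (rsum m a).
Proof.
  induction m as [|m IH]; simpl; [reflexivity|].
  rewrite IH. unfold Cadd, RtoC; simpl. f_equal; ring.
Qed.

Lemma rsum_ext m f g : (forall i, (i < m)%nat -> f i = g i) -> rsum m f = rsum m g.
Proof.
  induction m as [|m IH]; intros H; simpl; auto.
  rewrite IH, H; auto.
Qed.

Lemma rsum_plus m f g : rsum m (fun i => f i + g i) = rsum m f + rsum m g.
Proof. induction m as [|m IH]; simpl; [ring|]. rewrite IH; ring. Qed.

Lemma rsum_scal m c f : rsum m (fun i => c * f i) = c * rsum m f.
Proof. induction m as [|m IH]; simpl; [ring|]. rewrite IH; ring. Qed.

Lemma rsum_const m c : rsum m (fun _ => c) = INR m * c.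
Proof. induction m as [|m IH]; simpl rsum; [simpl; ring|]. rewrite IH, S_INR; ring. Qed.

Lemma rsum_exchange m p (h : nat -> nat -> R) :
  rsum m (fun i => rsum p (h i)) = rsum p (fun j => rsum m (fun i => h i j)).
Proof.
  induction m as [|m IH]; simpl.
  - rewrite rsum_const. ring.
  - rewrite IH, <- rsum_plus. reflexivity.
Qed.

Lemma rsum_ge_const m f c : (forall i, (i < m)%nat -> c <= f i) -> INR m * c <= rsum m f.
Proof.
  induction m as [|m IH]; intros H; simpl rsum; [simpl; lra|].
  rewrite S_INR. specialize (IH ltac:(intros; apply H; lia)).
  specialize (H m ltac:(lia)). lra.
Qed.

Lemma rsum_delta n k f : (1 <= k <= n)%nat ->
  rsum n (fun i => if Nat.eq_dec (S i) k then f (S i) else 0) = f k.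
Proof.
  induction n as [|n IH]; intros Hk; [lia|]. cbn [rsum].
  destruct (Nat.eq_dec (S n) k) as [<-|Hne].
  - rewrite (rsum_ext n _ (fun _ => 0)), rsum_const; [ring|].
    intros i Hi. destruct (Nat.eq_dec (S i) (S n)); [lia|auto].
  - rewrite IH by lia. ring.
Qed.

Lemma maxupto_ge0 n f : 0 <= maxupto n f.
Proof. induction n; simpl; [lra|]. eapply Rle_trans; [eassumption|apply Rmax_l]. Qed.

Lemma maxupto_ge n f k : (1 <= k <= n)%nat -> f k <= maxupto n f.
Proof.
  induction n as [|n IH]; intros Hk; simpl; [lia|].
  destruct (Nat.eq_dec k (S n)) as [->|Hne]; [apply Rmax_r|].
  eapply Rle_trans; [apply IH; lia|apply Rmax_l].
Qed.

Lemma maxupto_le_add n f g h : (forall k, (1 <= k <= n)%nat -> f k <= g k + h k) ->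
  maxupto n f <= maxupto n g + maxupto n h.
Proof.
  induction n as [|n IH]; intros H; simpl; [lra|].
  apply Rmax_lub.
  - eapply Rle_trans; [apply IH; intros; apply H; lia|].
    apply Rplus_le_compat; apply Rmax_l.
  - eapply Rle_trans; [apply H; lia|].
    apply Rplus_le_compat; apply Rmax_r.
Qed.

Lemma vdist_triangle n x y z : vdist n x z <= vdist n x y + vdist n y z.
Proof.
  apply maxupto_le_add. intros k _. cbv beta. rewrite !Cmod_eq.
  change (Csub ?a ?b) with (a - b)%C.
  replace (x k - z k)%C with ((x k - y k) + (y k - z k))%C by ring.
  apply Cmod_triangle.
Qed.

Lemma Cmod_sub_moment_le_vdist n lam w k : (1 <= k <= n)%nat ->
  Complex.Cmod (w k - Complex.Cpow lam k) <= vdist n (moment lam) w.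
Proof.
  intros Hk. eapply Rle_trans; [|apply (maxupto_ge n _ k Hk)]. cbv beta.
  rewrite Cmod_eq. change (Complex.Cmod (w k - lam ^ k) <= Complex.Cmod (lam ^ k - w k)).
  replace (w k - lam ^ k)%C with (- (lam ^ k - w k))%C by ring.
  rewrite Cmod_opp. apply Rle_refl.
Qed.

Lemma boundary_vdist_ge n S p r :
  (forall w, vdist n p w < r -> S w) ->
  forall z, boundary n S z -> vdist n p z >= r.
Proof.
  intros Hball z [_ Hint].
  destruct (Rlt_or_le (vdist n p z) r) as [Hlt|Hle]; [|lra].
  exfalso; apply Hint. exists (r - vdist n p z). split; [lra|].
  intros w Hw. apply Hball. pose proof (vdist_triangle n p z w). lra.
Qed.

(* [binom_shift a k x = sum_(j <= k) binom(k, j) a^(k-j) x_j]. *)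
Fixpoint binom_shift (a : C) (k : nat) (x : nat -> C) : C :=
  match k with
  | O => x O
  | S k => (a * binom_shift a k x + binom_shift a k (fun j => x (S j)))%C
  end.

Lemma binom_shift_ext a k x y :
  (forall j, (j <= k)%nat -> x j = y j) -> binom_shift a k x = binom_shift a k y.
Proof.
  revert x y; induction k as [|k IH]; intros x y H; simpl; [apply H; lia|].
  rewrite (IH x y), (IH (fun j => x (S j)) (fun j => y (S j))); auto;
    intros; apply H; lia.
Qed.

Lemma binom_shift_linear a k c x y :
  binom_shift a k (fun j => (c * x j + y j)%C) = (c * binom_shift a k x + binom_shift a k y)%C.
Proof.
  revert x y; induction k as [|k IH]; intros x y; simpl; [reflexivity|].
  rewrite IH, (IH (fun j => x (S j)) (fun j => y (S j))). ring.
Qed.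

Lemma binom_shift_zero a k : binom_shift a k (fun _ => 0%C) = 0%C.
Proof. induction k as [|k IH]; simpl; [reflexivity|]. rewrite IH. ring. Qed.

Lemma binom_shift0 k x : binom_shift 0 k x = x k.
Proof.
  revert x; induction k as [|k IH]; intros x; simpl; [reflexivity|].
  rewrite !IH. ring.
Qed.

Lemma binom_shift_comp a b k x :
  binom_shift a k (fun j => binom_shift b j x) = binom_shift (a + b) k x.
Proof.
  revert x; induction k as [|k IH]; intros x; simpl; [reflexivity|].
  change (fun j => binom_shift b (S j) x) with
    (fun j => (b * binom_shift b j x + binom_shift b j (fun i => x (S i)))%C).
  rewrite binom_shift_linear, !IH. ring.
Qed.

Lemma binom_shift_moment a k mu : binom_shift a k (Complex.Cpow mu) = Complex.Cpow (a + mu) k.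
Proof.
  revert a; induction k as [|k IH]; intros a; simpl; [reflexivity|].
  transitivity (a * binom_shift a k (Complex.Cpow mu) +
                binom_shift a k (fun j => mu * Complex.Cpow mu j + 0))%C.
  { f_equal. apply binom_shift_ext. intros; simpl. ring. }
  rewrite binom_shift_linear, binom_shift_zero, !IH. ring.
Qed.

Lemma binom_shift_csum a k m (c : nat -> C) (y : nat -> nat -> C) :
  binom_shift a k (fun j => csum m (fun i => c i * y i j)%C) =
  csum m (fun i => c i * binom_shift a k (y i))%C.
Proof.
  induction m as [|m IH]; simpl; [apply binom_shift_zero|].
  change (Cadd ?u ?v) with (u + v)%C.
  transitivity (binom_shift a k (fun j => c m * y m j + csum m (fun i => c i * y i j))%C).
  { apply binom_shift_ext; intros. change (Cadd ?u ?v) with (u + v)%C. ring. }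
  rewrite binom_shift_linear, IH. ring.
Qed.

Lemma binom_shift_Cmod_le a k x d :
  (forall j, (j <= k)%nat -> Complex.Cmod (x j) <= d) ->
  Complex.Cmod (binom_shift a k x) <= d * (1 + Complex.Cmod a) ^ k.
Proof.
  revert x; induction k as [|k IH]; intros x H; simpl.
  - rewrite Rmult_1_r. apply H; lia.
  - eapply Rle_trans; [apply Cmod_triangle|]. rewrite Cmod_mult.
    pose proof (IH x ltac:(intros; apply H; lia)) as Hx.
    pose proof (IH (fun j => x (S j)) ltac:(intros; apply H; lia)) as Hsx.
    pose proof (Cmod_ge_0 a).
    pose proof (Rmult_le_compat_l _ _ _ (Cmod_ge_0 a) Hx). lra.
Qed.

Definition conv_moments (n : nat) (rho : R) (c : Cx) (u : vec) : Prop :=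
  exists m a mu,
    (forall i, (i < m)%nat -> 0 <= a i /\ Cmod (Csub (mu i) c) <= rho) /\
    rsum m a = 1 /\
    vec_eq n u (fun k => csum m (fun i => Cscale (a i) (moment (mu i) k))).

Lemma conv_moments_Cset n rho c u : conv_moments n rho c u -> Cset n rho c u.
Proof.
  intros (m & a & mu & Hnodes & Hsum & Hu). exists m, a, (fun i => moment (mu i)).
  split; [|split; auto]. intros i Hi. split; [apply Hnodes, Hi|].
  exists (mu i). split; [apply Hnodes, Hi|]. intros k _; reflexivity.
Qed.

Lemma conv_moments_vec_eq n rho c u v :
  vec_eq n u v -> conv_moments n rho c u -> conv_moments n rho c v.
Proof.
  intros Huv (m & a & mu & Hnodes & Hsum & Hu). exists m, a, mu.
  split; [exact Hnodes|split; [exact Hsum|]].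
  intros k Hk. rewrite <- Huv by exact Hk. auto.
Qed.

Lemma conv_moments_translate n rho (lam : C) u : u O = C1 ->
  conv_moments n rho C0 u -> conv_moments n rho lam (fun k => binom_shift lam k u).
Proof.
  intros Hu0 (m & a & mu & Hnodes & Hsum & Hu).
  exists m, a, (fun i => lam + mu i)%C. split; [|split; auto].
  - intros i Hi. destruct (Hnodes i Hi) as [Ha Hmu]. split; auto.
    replace (Csub (lam + mu i)%C lam) with (Csub (mu i) C0); auto.
    change ((mu i - 0)%C = (lam + mu i - lam)%C). ring.
  - intros k Hk.
    transitivity (binom_shift lam k
      (fun j => csum m (fun i => RtoC (a i) * Complex.Cpow (mu i) j)%C)).
    + apply binom_shift_ext. intros [|j] Hj.
      * rewrite Hu0. change C1 with (RtoC 1).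
        rewrite <- Hsum, <- csum_RtoC. apply csum_ext. intros i _. symmetry. apply Cmult_1_r.
      * rewrite (Hu (S j)) by lia. apply csum_ext. intros i _. apply Cscale_eq.
    + rewrite binom_shift_csum. apply csum_ext. intros i _.
      rewrite Cscale_eq, binom_shift_moment. reflexivity.
Qed.

(* Points of [C^n] carry no zeroth coordinate, but [binom_shift] reads the zeroth moment,
   which is [1] for every convex combination of moment vectors. *)
Definition with_unit (w : vec) : nat -> C := fun j => match j with O => C1 | _ => w j end.

Lemma binom_shift_near_moment n (lam : C) w k : (1 <= k <= n)%nat ->
  Complex.Cmod (binom_shift (- lam) k (with_unit w)) <=
  vdist n (moment lam) w * (1 + Complex.Cmod lam) ^ k.
Proof.
  intros Hk.
  rewrite (binom_shift_ext (- lam) k (with_unit w)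
    (fun j => 1 * (with_unit w j - Complex.Cpow lam j) + Complex.Cpow lam j)%C)
    by (intros; ring).
  rewrite binom_shift_linear, binom_shift_moment.
  replace (- lam + lam)%C with (RtoC 0) by ring.
  destruct k as [|k]; [lia|]. simpl Complex.Cpow at 2.
  rewrite Cmult_0_l, Cplus_0_r, Cmult_1_l, <- (Cmod_opp lam).
  apply binom_shift_Cmod_le. intros [|j] Hj.
  - change (with_unit w 0 - Complex.Cpow lam 0)%C with (RtoC 1 - RtoC 1)%C.
    replace (RtoC 1 - RtoC 1)%C with (RtoC 0) by ring.
    rewrite Cmod_0. apply maxupto_ge0.
  - apply (Cmod_sub_moment_le_vdist n lam w (S j)). lia.
Qed.

Lemma one_plus_pow_le L n k : 0 <= L -> (k <= n)%nat ->
  (1 + L) ^ k <= 2 ^ n * Rmax 1 (L ^ n).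
Proof.
  intros HL Hk.
  apply Rle_trans with ((1 + L) ^ n); [apply Rle_pow; [lra|lia]|].
  apply Rle_trans with ((2 * Rmax 1 L) ^ n).
  { apply pow_incr. pose proof (Rmax_l 1 L). pose proof (Rmax_r 1 L). lra. }
  rewrite Rpow_mult_distr. apply Rmult_le_compat_l; [apply pow_le; lra|].
  destruct (Rle_dec 1 L).
  - rewrite Rmax_right by lra. apply Rmax_r.
  - rewrite Rmax_left by lra. rewrite pow1. apply Rmax_l.
Qed.

Lemma conv_moments_ball_translate n rho (lam : C) :
  (forall u, (forall k, (1 <= k <= n)%nat -> Complex.Cmod (u k) < rho ^ n / 2 ^ n) ->
     conv_moments n rho C0 u) ->
  forall w, vdist n (moment lam) w < rho ^ n / (4 ^ n * Rmax 1 (Cmod lam ^ n)) ->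
  conv_moments n rho lam w.
Proof.
  intros Hball w Hw.
  set (M := Rmax 1 (Cmod lam ^ n)).
  assert (HM : 0 < M) by (pose proof (Rmax_l 1 (Cmod lam ^ n)); unfold M; lra).
  assert (H2n : 0 < 2 ^ n) by (apply pow_lt; lra).
  set (u := fun j => binom_shift (- lam) j (with_unit w)).
  assert (Hsmall : forall k, (1 <= k <= n)%nat -> Complex.Cmod (u k) < rho ^ n / 2 ^ n).
  { intros k Hk. eapply Rle_lt_trans; [apply binom_shift_near_moment; exact Hk|].
    rewrite <- Cmod_eq.
    pose proof (one_plus_pow_le (Cmod lam) n k ltac:(rewrite Cmod_eq; apply Cmod_ge_0)
      ltac:(lia)) as Hpow.
    apply Rle_lt_trans with (vdist n (moment lam) w * (2 ^ n * M)).
    { apply Rmult_le_compat_l; [apply maxupto_ge0|exact Hpow]. }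
    replace (rho ^ n / 2 ^ n) with (rho ^ n / (4 ^ n * M) * (2 ^ n * M)).
    - apply Rmult_lt_compat_r; [apply Rmult_lt_0_compat|]; auto.
    - replace 4 with (2 * 2) by ring. rewrite Rpow_mult_distr. field. lra. }
  apply (conv_moments_vec_eq n rho lam (fun k => binom_shift lam k u)).
  - intros k Hk. unfold u. rewrite binom_shift_comp.
    replace (lam + - lam)%C with (RtoC 0) by ring.
    rewrite binom_shift0. destruct k; [lia|reflexivity].
  - apply conv_moments_translate; [reflexivity|]. apply Hball, Hsmall.
Qed.

Definition angle (N : nat) : R := 2 * PI / INR N.
Definition cos_sum (N : nat) (q : R) : R := rsum N (fun j => cos (INR j * (angle N * q))).
Definition sin_sum (N : nat) (q : R) : R := rsum N (fun j => sin (INR j * (angle N * q))).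

Lemma sin_half_mul_rsum_cos x M :
  2 * sin (x / 2) * rsum M (fun j => cos (INR j * x)) = sin ((INR M - 1/2) * x) + sin (x / 2).
Proof.
  induction M as [|M IH]; simpl rsum.
  - simpl INR. replace ((0 - 1/2) * x) with (- (x / 2)) by field. rewrite sin_neg. ring.
  - rewrite Rmult_plus_distr_l, IH, S_INR.
    replace ((INR M + 1 - 1/2) * x) with (INR M * x + x / 2) by field.
    replace ((INR M - 1/2) * x) with (INR M * x - x / 2) by field.
    rewrite sin_plus, sin_minus. ring.
Qed.

Lemma sin_half_mul_rsum_sin x M :
  2 * sin (x / 2) * rsum M (fun j => sin (INR j * x)) = cos (x / 2) - cos ((INR M - 1/2) * x).
Proof.
  induction M as [|M IH]; simpl rsum.
  - simpl INR. replace ((0 - 1/2) * x) with (- (x / 2)) by field. rewrite cos_neg. ring.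
  - rewrite Rmult_plus_distr_l, IH, S_INR.
    replace ((INR M + 1 - 1/2) * x) with (INR M * x + x / 2) by field.
    replace ((INR M - 1/2) * x) with (INR M * x - x / 2) by field.
    rewrite cos_plus, cos_minus. ring.
Qed.

Lemma root_sums_eq0 N p : (0 < p < N)%nat -> cos_sum N (INR p) = 0 /\ sin_sum N (INR p) = 0.
Proof.
  intros Hp. set (x := angle N * INR p).
  assert (HN : 0 < INR N) by (apply lt_0_INR; lia).
  assert (Hpn : INR p < INR N) by (apply lt_INR; lia).
  assert (Hp0 : 0 < INR p) by (apply lt_0_INR; lia).
  assert (Hsin : 0 < sin (x / 2)).
  { pose proof PI_RGT_0.
    replace (x / 2) with (PI * (INR p / INR N)) by (unfold x, angle; field; lra).
    assert (0 < INR p / INR N < 1).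
    { split; [apply Rdiv_lt_0_compat; lra|].
      apply Rmult_lt_reg_r with (INR N); auto. field_simplify; lra. }
    apply sin_gt_0; nra. }
  assert (Hlast : (INR N - 1/2) * x = - (x / 2) + 2 * INR p * PI)
    by (unfold x, angle; field; lra).
  split.
  - pose proof (sin_half_mul_rsum_cos x N) as T.
    rewrite Hlast, sin_period, sin_neg in T. unfold cos_sum. fold x. nra.
  - pose proof (sin_half_mul_rsum_sin x N) as T.
    rewrite Hlast, cos_period, cos_neg in T. unfold sin_sum. fold x. nra.
Qed.

Lemma cos_sum_opp N q : cos_sum N (- q) = cos_sum N q.
Proof. apply rsum_ext; intros. rewrite <- cos_neg. f_equal. ring. Qed.

Lemma sin_sum_opp N q : sin_sum N (- q) = - sin_sum N q.
Proof.
  unfold sin_sum. rewrite (rsum_ext N _ (fun j => -1 * sin (INR j * (angle N * q)))).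
  - rewrite rsum_scal. ring.
  - intros. replace (INR i * (angle N * - q)) with (- (INR i * (angle N * q))) by ring.
    rewrite sin_neg. ring.
Qed.

Lemma root_sums_sub_eq0 N k m : (k < N)%nat -> (m < N)%nat -> k <> m ->
  cos_sum N (INR k - INR m) = 0 /\ sin_sum N (INR k - INR m) = 0.
Proof.
  intros Hk Hm Hkm. destruct (Nat.lt_ge_cases k m) as [Hlt|Hge].
  - replace (INR k - INR m) with (- INR (m - k)) by (rewrite minus_INR by lia; ring).
    rewrite cos_sum_opp, sin_sum_opp.
    destruct (root_sums_eq0 N (m - k)) as [-> ->]; [lia|]. split; ring.
  - replace (INR k - INR m) with (INR (k - m)) by (rewrite minus_INR by lia; ring).
    apply root_sums_eq0; lia.
Qed.

Lemma cos_sum0 N : cos_sum N 0 = INR N.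
Proof.
  unfold cos_sum. rewrite (rsum_ext N _ (fun _ => 1)), rsum_const; [ring|].
  intros. rewrite !Rmult_0_r. apply cos_0.
Qed.

Lemma sin_sum0 N : sin_sum N 0 = 0.
Proof.
  unfold sin_sum. rewrite (rsum_ext N _ (fun _ => 0)), rsum_const; [ring|].
  intros. rewrite !Rmult_0_r. apply sin_0.
Qed.

(* Real and imaginary parts of [omega^(j k)], where [omega = exp (2 i pi / N)]. *)
Definition re_root (N j k : nat) : R := cos (INR j * (angle N * INR k)).
Definition im_root (N j k : nat) : R := sin (INR j * (angle N * INR k)).

Lemma rsum_root_products N k m :
  rsum N (fun j => re_root N j k * re_root N j m) =
    (cos_sum N (INR k - INR m) + cos_sum N (INR k + INR m)) / 2 /\
  rsum N (fun j => im_root N j k * re_root N j m) =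
    (sin_sum N (INR k + INR m) + sin_sum N (INR k - INR m)) / 2 /\
  rsum N (fun j => re_root N j k * im_root N j m) =
    (sin_sum N (INR k + INR m) - sin_sum N (INR k - INR m)) / 2 /\
  rsum N (fun j => im_root N j k * im_root N j m) =
    (cos_sum N (INR k - INR m) - cos_sum N (INR k + INR m)) / 2.
Proof.
  assert (Hplus : forall f g h : nat -> R, (forall j, f j = (g j + h j) / 2) ->
     rsum N f = (rsum N g + rsum N h) / 2).
  { intros f g h E. rewrite (rsum_ext N f (fun j => / 2 * (g j + h j))).
    - rewrite rsum_scal, rsum_plus. field.
    - intros; rewrite E; field. }
  assert (Hminus : forall f g h : nat -> R, (forall j, f j = (g j - h j) / 2) ->
     rsum N f = (rsum N g - rsum N h) / 2).
  { intros f g h E. rewrite (rsum_ext N f (fun j => / 2 * (g j + -1 * h j))).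
    - rewrite rsum_scal, rsum_plus, rsum_scal. field.
    - intros; rewrite E; field. }
  unfold cos_sum, sin_sum, re_root, im_root.
  repeat split; [apply Hplus|apply Hplus|apply Hminus|apply Hminus]; intros j;
    set (a := INR j * (angle N * INR k)); set (b := INR j * (angle N * INR m));
    replace (INR j * (angle N * (INR k - INR m))) with (a - b) by (unfold a, b; ring);
    replace (INR j * (angle N * (INR k + INR m))) with (a + b) by (unfold a, b; ring);
    rewrite ?cos_plus, ?cos_minus, ?sin_plus, ?sin_minus; field.
Qed.

Lemma root_orthogonality N k m : (1 <= k)%nat -> (1 <= m)%nat -> (k + m < N)%nat ->
  rsum N (fun j => re_root N j k * re_root N j m) = (if Nat.eq_dec k m then INR N / 2 else 0) /\
  rsum N (fun j => im_root N j k * re_root N j m) = 0 /\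
  rsum N (fun j => re_root N j k * im_root N j m) = 0 /\
  rsum N (fun j => im_root N j k * im_root N j m) = (if Nat.eq_dec k m then INR N / 2 else 0).
Proof.
  intros Hk Hm HN. destruct (rsum_root_products N k m) as (-> & -> & -> & ->).
  rewrite <- plus_INR. destruct (root_sums_eq0 N (k + m)) as [-> ->]; [lia|].
  destruct (Nat.eq_dec k m) as [<-|Hne].
  - rewrite Rminus_diag, cos_sum0, sin_sum0. repeat split; field.
  - destruct (root_sums_sub_eq0 N k m) as [-> ->]; try lia. repeat split; field.
Qed.

Lemma Cpow_polar r t m :
  Cpow (r * cos t, r * sin t) m = (r ^ m * cos (INR m * t), r ^ m * sin (INR m * t)).
Proof.
  induction m as [|m IH]; cbn [Cpow].
  - simpl. rewrite Rmult_0_l, cos_0, sin_0. unfold C1. f_equal; ring.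
  - rewrite IH, S_INR. replace ((INR m + 1) * t) with (INR m * t + t) by ring.
    rewrite cos_plus, sin_plus. unfold Cmul; simpl. f_equal; ring.
Qed.

Lemma neg_sqrt_le_cos_sin_comb a b t : - sqrt (a * a + b * b) <= a * cos t + b * sin t.
Proof.
  set (s := a * cos t + b * sin t).
  assert (Hs : s * s <= a * a + b * b).
  { pose proof (sin2_cos2 t) as E. unfold Rsqr in E.
    assert (a * a + b * b - s * s = (a * sin t - b * cos t) ^ 2).
    { unfold s. replace (a * a + b * b) with
        ((a * a + b * b) * (sin t * sin t + cos t * cos t)) by (rewrite E; ring).
      ring. }
    pose proof (pow2_ge_0 (a * sin t - b * cos t)). lra. }
  pose proof (sqrt_le_1_alt _ _ Hs) as Hsqrt.
  replace (sqrt (s * s)) with (Rabs s) in Hsqrt by (symmetry; apply sqrt_Rsqr_abs).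
  pose proof (Rle_abs (- s)). rewrite Rabs_Ropp in *. lra.
Qed.

Lemma pow_le_pow_le1 x k n : 0 < x <= 1 -> (k <= n)%nat -> x ^ n <= x ^ k.
Proof.
  intros Hx Hk. replace n with (k + (n - k))%nat by lia. rewrite pow_add.
  pose proof (pow_lt x k ltac:(lra)).
  assert (x ^ (n - k) <= 1) by (rewrite <- (pow1 (n - k)); apply pow_incr; lra).
  pose proof (pow_le x (n - k) ltac:(lra)). nra.
Qed.

Lemma double_le_pow2 n : 2 * INR n <= 2 ^ n.
Proof.
  assert (H : forall m, INR m + 1 <= 2 ^ m).
  { induction m as [|m IH]; [simpl; lra|]. rewrite S_INR. simpl pow.
    pose proof (pos_INR m). lra. }
  destruct n as [|n]; [simpl; lra|]. rewrite S_INR. simpl pow. pose proof (H n). lra.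
Qed.

Section SmallBallAtOrigin.

Variables (n : nat) (rho : R) (u : vec).
Hypothesis Hrho : 0 < rho <= 1.
Hypothesis Hu : forall k, (1 <= k <= n)%nat -> Complex.Cmod (u k) < rho ^ n / 2 ^ n.

Let N : nat := S (2 * n).
Let coef_re (k : nat) : R := fst (u k) / rho ^ k.
Let coef_im (k : nat) : R := snd (u k) / rho ^ k.
(* [osc j k] is the real part of [conj (u_k / rho^k) * omega^(j k)]. *)
Let osc (j k : nat) : R := coef_re k * re_root N j k + coef_im k * im_root N j k.
Let weight (j : nat) : R := (1 + 2 * rsum n (fun i => osc j (S i))) / INR N.
Let node (j : nat) : Cx := (rho * cos (angle N * INR j), rho * sin (angle N * INR j)).

Let N_pos : 0 < INR N.
Proof. apply lt_0_INR. unfold N. lia. Qed.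

Lemma osc_ge j k : (1 <= k <= n)%nat -> - / 2 ^ n <= osc j k.
Proof.
  intros Hk. unfold osc, coef_re, coef_im, re_root, im_root.
  set (t := INR j * (angle N * INR k)).
  pose proof (pow_lt rho k ltac:(lra)) as Hrk.
  pose proof (pow_lt 2 n ltac:(lra)) as H2n.
  pose proof (neg_sqrt_le_cos_sin_comb (fst (u k)) (snd (u k)) t) as Hcomb.
  assert (Hmod : sqrt (fst (u k) * fst (u k) + snd (u k) * snd (u k)) < rho ^ k / 2 ^ n).
  { pose proof (Hu k Hk) as Huk. rewrite <- Cmod_eq in Huk.
    pose proof (pow_le_pow_le1 rho k n Hrho ltac:(lia)).
    assert (rho ^ n / 2 ^ n <= rho ^ k / 2 ^ n)
      by (apply Rmult_le_compat_r; [left; apply Rinv_0_lt_compat|]; auto).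
    unfold Cmod in Huk. lra. }
  replace (fst (u k) / rho ^ k * cos t + snd (u k) / rho ^ k * sin t)
    with ((fst (u k) * cos t + snd (u k) * sin t) * / rho ^ k) by (field; lra).
  replace (- / 2 ^ n) with (- (rho ^ k / 2 ^ n) * / rho ^ k) by (field; lra).
  apply Rmult_le_compat_r; [left; apply Rinv_0_lt_compat; auto|lra].
Qed.

(* The oscillating part of the weight is at least [- 2 n / 2^n >= -1]. *)
Lemma weight_nonneg j : 0 <= weight j.
Proof.
  apply Rmult_le_pos; [|left; apply Rinv_0_lt_compat, N_pos].
  pose proof (rsum_ge_const n (fun i => osc j (S i)) (- / 2 ^ n)
    ltac:(intros; apply osc_ge; lia)).
  pose proof (double_le_pow2 n). pose proof (pow_lt 2 n ltac:(lra)).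
  assert (INR n * / 2 ^ n <= / 2).
  { apply Rmult_le_reg_r with (2 * 2 ^ n); [nra|].
    replace (INR n * / 2 ^ n * (2 * 2 ^ n)) with (2 * INR n) by (field; lra).
    replace (/ 2 * (2 * 2 ^ n)) with (2 ^ n) by field. auto. }
  lra.
Qed.

Lemma rsum_weight_mul (P : nat -> R) :
  rsum N (fun j => weight j * P j) =
  (rsum N P + 2 * rsum n (fun i => rsum N (fun j => osc j (S i) * P j))) / INR N.
Proof.
  rewrite (rsum_ext N _ (fun j => / INR N * (P j + 2 * rsum n (fun i => osc j (S i) * P j)))).
  - rewrite rsum_scal, rsum_plus, rsum_scal, rsum_exchange. unfold Rdiv. ring.
  - intros j _. unfold weight.
    rewrite (rsum_ext n (fun i => osc j (S i) * P j) (fun i => P j * osc j (S i)))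
      by (intros; ring).
    rewrite rsum_scal. field. lra.
Qed.

Lemma weight_sum : rsum N weight = 1.
Proof.
  rewrite (rsum_ext N weight (fun j => weight j * 1)) by (intros; ring).
  rewrite rsum_weight_mul, rsum_const.
  rewrite (rsum_ext n _ (fun _ => 0)), rsum_const; [field; lra|].
  intros i Hi. unfold osc.
  rewrite (rsum_ext N _ (fun j => coef_re (S i) * re_root N j (S i) +
                                  coef_im (S i) * im_root N j (S i))) by (intros; ring).
  rewrite rsum_plus, !rsum_scal.
  destruct (root_sums_eq0 N (S i)) as [Hc Hs]; [unfold N; lia|].
  unfold cos_sum, sin_sum in Hc, Hs. unfold re_root, im_root. rewrite Hc, Hs. ring.
Qed.

Lemma rsum_osc_mul_roots k m : (1 <= k <= n)%nat -> (1 <= m <= n)%nat ->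
  rsum N (fun j => osc j k * re_root N j m) =
    (if Nat.eq_dec k m then coef_re k * (INR N / 2) else 0) /\
  rsum N (fun j => osc j k * im_root N j m) =
    (if Nat.eq_dec k m then coef_im k * (INR N / 2) else 0).
Proof.
  intros Hk Hm. unfold osc.
  destruct (root_orthogonality N k m) as (Hrr & Hir & Hri & Hii); try (unfold N; lia).
  split; [rewrite (rsum_ext N _ (fun j => coef_re k * (re_root N j k * re_root N j m) +
                                         coef_im k * (im_root N j k * re_root N j m)))
         |rewrite (rsum_ext N _ (fun j => coef_re k * (re_root N j k * im_root N j m) +
                                         coef_im k * (im_root N j k * im_root N j m)))];
    try (intros; ring); rewrite rsum_plus, !rsum_scal; [rewrite Hrr, Hir|rewrite Hri, Hii];
    destruct (Nat.eq_dec k m); ring.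
Qed.

Lemma weight_roots m : (1 <= m <= n)%nat ->
  rsum N (fun j => weight j * re_root N j m) = coef_re m /\
  rsum N (fun j => weight j * im_root N j m) = coef_im m.
Proof.
  intros Hm. rewrite !rsum_weight_mul.
  destruct (root_sums_eq0 N m) as [Hc Hs]; [unfold N; lia|].
  change (rsum N (fun j => re_root N j m)) with (cos_sum N (INR m)).
  change (rsum N (fun j => im_root N j m)) with (sin_sum N (INR m)).
  rewrite Hc, Hs.
  rewrite (rsum_ext n (fun i => rsum N (fun j => osc j (S i) * re_root N j m))
    (fun i => if Nat.eq_dec (S i) m then (fun k => coef_re k * (INR N / 2)) (S i) else 0)),
    (rsum_ext n (fun i => rsum N (fun j => osc j (S i) * im_root N j m))
    (fun i => if Nat.eq_dec (S i) m then (fun k => coef_im k * (INR N / 2)) (S i) else 0)),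
    (rsum_delta n m (fun k => coef_re k * (INR N / 2))),
    (rsum_delta n m (fun k => coef_im k * (INR N / 2)))
    by (try intros i Hi; try apply (rsum_osc_mul_roots (S i) m); lia).
  split; field; lra.
Qed.

Lemma moment_node j m :
  moment (node j) m = (rho ^ m * re_root N j m, rho ^ m * im_root N j m).
Proof.
  unfold moment, node. rewrite Cpow_polar. unfold re_root, im_root.
  replace (INR m * (angle N * INR j)) with (INR j * (angle N * INR m)) by ring.
  reflexivity.
Qed.

Lemma node_Cmod j : Cmod (Csub (node j) C0) = rho.
Proof.
  unfold node, Csub, C0, Cmod; cbn [fst snd].
  set (t := angle N * INR j). pose proof (sin2_cos2 t) as E. unfold Rsqr in E.
  replace ((rho * cos t - 0) * (rho * cos t - 0) + (rho * sin t - 0) * (rho * sin t - 0))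
    with (rho * rho * (sin t * sin t + cos t * cos t)) by ring.
  rewrite E, Rmult_1_r. apply sqrt_square. lra.
Qed.

Lemma conv_moments_origin : conv_moments n rho C0 u.
Proof.
  exists N, weight, node. split; [|split; [apply weight_sum|]].
  - intros i _. split; [apply weight_nonneg|]. rewrite node_Cmod. lra.
  - intros m Hm. rewrite csum_components, (surjective_pairing (u m)).
    destruct (weight_roots m Hm) as [Hre Him].
    pose proof (pow_lt rho m ltac:(lra)).
    f_equal.
    + rewrite (rsum_ext N _ (fun j => rho ^ m * (weight j * re_root N j m)))
        by (intros j _; rewrite moment_node; simpl; ring).
      rewrite rsum_scal, Hre. unfold coef_re. field. lra.
    + rewrite (rsum_ext N _ (fun j => rho ^ m * (weight j * im_root N j m)))
        by (intros j _; rewrite moment_node; simpl; ring).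
      rewrite rsum_scal, Him. unfold coef_im. field. lra.
Qed.

End SmallBallAtOrigin.

Theorem lemma4p9 (lam : Cx) (n : nat) (rho : R) :
  0 < rho <= 1 ->
  (forall z, boundary n (Cset n rho lam) z ->
     vdist n (moment lam) z >= rho ^ n / (4 ^ n * Rmax 1 (Cmod lam ^ n))) /\
  (lam = C0 ->
   forall z, boundary n (Cset n rho C0) z ->
     vdist n (moment C0) z >= rho ^ n / 2 ^ n).
Proof.
  intros Hrho.
  pose proof (fun u => conv_moments_origin n rho u Hrho) as Hball0.
  split.
  - apply boundary_vdist_ge. intros w Hw.
    apply conv_moments_Cset, (conv_moments_ball_translate n rho lam Hball0), Hw.
  - intros _. apply boundary_vdist_ge. intros w Hw.
    apply conv_moments_Cset, Hball0. intros [|k] Hk; [lia|].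
    eapply Rle_lt_trans; [|exact Hw].
    replace (Complex.Cmod (w (S k))) with (Complex.Cmod (w (S k) - Complex.Cpow C0 (S k)))
      by (f_equal; change C0 with (RtoC 0); simpl; ring).
    apply Cmod_sub_moment_le_vdist, Hk.
Qed.
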